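(* Let $0<V\le1$ and let $P^{col}_{BB84}$ be the box on $a,b,x,y\in\{0,1\}$ given by $$P^{col}_{BB84}(ab|xy)=\frac{1+(-1)^{a\oplus b\oplus x\cdot y}\big[\delta_{x,y}V+\tfrac{1-V}{2}\big]+(-1)^{a\oplus b\oplus x\oplus y}\tfrac{1-V}{2}}{4}.$$ Let $\{|f_1\rangle,|f_2\rangle\}$ and $\{|g_1\rangle,|g_2\rangle\}$ be any two mutually unbiased orthonormal bases of $\mathbb{C}^2$ ($|\langle f_i|g_j\rangle|^2=1/2$ for all $i,j$), and let $\Pi_{b|0}=|f_{b+1}\rangle\langle f_{b+1}|$, $\Pi_{b|1}=|g_{b+1}\rangle\langle g_{b+1}|$. Then for every $V>0$, $P^{col}_{BB84}$ cannot be written as $$P^{col}_{BB84}(ab|xy)=\sum_{\chi,\zeta}p(\chi,\zeta)\,\delta_{a,f(x,\chi)}\,\langle\psi_\zeta|\Pi_{b|y}|\psi_\zeta\rangle\quad\forall a,b,x,y,$$ for any probability distribution $p(\chi,\zeta)$ (finitely many terms), any deterministic response functions $f(\cdot,\chi):\{0,1\}\to\{0,1\}$, and any pure qubit states $|\psi_\zeta\rangle\in\mathbb{C}^2$.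
   Context: $\oplus$ denotes addition modulo 2 and $\delta_{x,y}$ the Kronecker delta. The displayed decomposition is a convex mixture of the extremal points of the set of unsteerable boxes (boxes admitting a local hidden variable–local hidden state model) of the steering scenario in which Alice performs two black-box dichotomic measurements and Bob performs the two given qubit projective measurements. *)

From HB Require Import structures.
From mathcomp Require Import all_boot all_order all_algebra.
From mathcomp Require Import complex.
Set Implicit Arguments. Unset Strict Implicit. Unset Printing Implicit Defensive.
Import Order.TTheory GRing.Theory Num.Theory.
Local Open Scope ring_scope.
Local Open Scope complex_scope.

(* The box P^col_BB84(ab|xy); outcomes/settings a,b,x,y in {0,1} encoded as bool,
   a (+) b = addb, x.y = x && y, (-1)^b = (-1)^+ (nat_of_bool b). *)
Definition Pcol (R : rcfType) (V : R) (a b x y : bool) : R :=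
  (1 + (-1) ^+ (a (+) b (+) (x && y)) * ((x == y)%:R * V + (1 - V) / 2)
     + (-1) ^+ (a (+) b (+) x (+) y) * ((1 - V) / 2)) / 4.

Definition cdot (R : rcfType) (u v : 'cV[R[i]]_2) : R[i] :=
  \sum_(k < 2) (u k 0)^* * v k 0.

Definition proj (R : rcfType) (f : 'cV[R[i]]_2) : 'M[R[i]]_2 :=
  f *m (map_mx (@conjc R) f)^T.

Definition expect (R : rcfType) (psi : 'cV[R[i]]_2) (M : 'M[R[i]]_2) : R[i] :=
  ((map_mx (@conjc R) psi)^T *m M *m psi) 0 0.

(* Orthonormal basis {f false, f true} of C^2 (index b : bool stands for b+1). *)
Definition orthonormal2 (R : rcfType) (f : bool -> 'cV[R[i]]_2) : Prop :=
  forall i j : bool, cdot (f i) (f j) = (i == j)%:R.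

Definition mub2 (R : rcfType) (f g : bool -> 'cV[R[i]]_2) : Prop :=
  orthonormal2 f /\ orthonormal2 g /\
  forall i j : bool, (cdot (f i) (g j)) * (cdot (f i) (g j))^* = (1 / 2)%:C.

Definition pure_state (R : rcfType) (psi : 'cV[R[i]]_2) : Prop :=
  cdot psi psi = 1.

(* In the BB84 box Alice's and Bob's outcomes are perfectly correlated when
   x = y = 0.  In a local-hidden-state model this forces every hidden state
   that occurs with positive weight to give probability 0 to the projector
   f_(1-a), a being Alice's deterministic answer to x = 0; a pure qubit state
   is then f_a up to a phase, so Bob's outcome for the mutually unbiased
   measurement y = 1 is uniformly distributed.  Hence P(a b | 1 1) cannot
   depend on b, whereas P(0 1 | 1 1) - P(0 0 | 1 1) = V / 2 > 0. *)
From HB Require Import structures.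
From mathcomp Require Import all_boot all_order all_algebra.
From mathcomp Require Import complex.
From mathcomp Require Import ring lra.
Import Order.TTheory GRing.Theory Num.Theory.
Local Open Scope ring_scope.

Lemma psumr2_eq0P {R : numDomainType} {I J : finType} (F : I -> J -> R) :
  (forall i j, 0 <= F i j) -> \sum_i \sum_j F i j = 0 -> forall i j, F i j = 0.
Proof.
move=> F_ge0 sumF0 i j.
have sum_ge0 i' : 0 <= \sum_j F i' j by apply: sumr_ge0.
have rowF0 : \sum_j F i j = 0 by apply: (psumr_eq0P _ sumF0).
exact: (psumr_eq0P _ rowF0).
Qed.

Section Qubit.
Set Implicit Arguments.
Unset Strict Implicit.
Variable R : rcfType.
Implicit Types (u v psi : 'cV[R[i]]_2) (f g : bool -> 'cV[R[i]]_2).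

Lemma big_ord2 (V : nmodType) (F : 'I_2 -> V) :
  \sum_(k < 2) F k = F ord0 + F ord_max.
Proof. by rewrite big_ord_recl big_ord1; congr (_ + F _); apply: val_inj. Qed.

(* [proj] and [expect] conjugate with [conjc] but [cdot] with [Num.conj]. *)
Lemma conjcE (x : R[i]) : conjc x = Num.conj x.
Proof. by []. Qed.

Lemma conj_cdot u v : (cdot u v)^* = cdot v u.
Proof. by rewrite /cdot !big_ord2 -!conjcE rmorphD !rmorphM /= !conjcK !(mulrC (u _ _)). Qed.

Lemma expect_proj psi v : expect psi (proj v) = cdot v psi * (cdot v psi)^*.
Proof.
rewrite conj_cdot /expect /proj /cdot !mxE !big_ord2 !mxE !big_ord2 !mxE !big_ord1 !mxE !conjcE.
have -> : (0 : 'I_1) = ord0 by apply: val_inj.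
rewrite /=; ring.
Qed.

Lemma expect_proj_ge0 psi v : 0 <= expect psi (proj v).
Proof. by rewrite expect_proj mul_conjC_ge0. Qed.

(* With F the matrix of columns f false, f true, orthonormality says
   F^* F = 1; in finite dimension this gives F F^* = 1, entrywise below. *)
Lemma orthonormal2_resolution f : orthonormal2 f ->
  forall k l : 'I_2, \sum_b f b k 0 * (f b l 0)^* = (k == l)%:R.
Proof.
move=> hf k l.
pose F : 'M[R[i]]_2 := \matrix_(k, j) f (j != ord0) k 0.
pose Fadj : 'M[R[i]]_2 := \matrix_(j, k) (f (j != ord0) k 0)^*.
have FadjF : Fadj *m F = 1%:M.
  apply/matrixP => i j; rewrite !mxE big_ord2 !mxE.
  have := hf (i != ord0) (j != ord0); rewrite /cdot big_ord2 => ->.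
  by case: i => [[|[|//]] ?]; case: j => [[|[|//]] ?].
move/matrixP: (mulmx1C FadjF) => /(_ k l).
by rewrite !mxE big_ord2 big_bool !mxE addrC.
Qed.

Lemma orthonormal2_parseval f : orthonormal2 f -> forall b u v,
  cdot u v = cdot u (f b) * cdot (f b) v + cdot u (f (~~ b)) * cdot (f (~~ b)) v.
Proof.
move=> /orthonormal2_resolution hf b u v.
transitivity (\sum_(k < 2) \sum_(l < 2) (u k 0)^* * (k == l)%:R * v l 0).
  apply: eq_bigr => k _; rewrite (bigD1 k) //= eqxx mulr1 big1 ?addr0 // => l.
  by rewrite eq_sym => /negbTE ->; rewrite mulr0 mul0r.
under eq_bigr do under eq_bigr do rewrite -hf.
rewrite /cdot !big_ord2 !big_bool.
by case: b => /=; ring.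
Qed.

Lemma mub2_expect_half f g psi b c : mub2 f g -> pure_state psi ->
  expect psi (proj (f b)) = 0 -> expect psi (proj (g c)) = ((1 / 2)%:C)%C.
Proof.
move=> [hf [_ hfg]] hpsi.
rewrite !expect_proj => /eqP; rewrite mulf_eq0 conjC_eq0 orbb => /eqP fb_psi.
have along_f u : cdot u psi = cdot u (f (~~ b)) * cdot (f (~~ b)) psi.
  by rewrite (orthonormal2_parseval hf b) fb_psi mulr0 add0r.
have norm_psi : `|cdot (f (~~ b)) psi| ^+ 2 = 1.
  by rewrite normCK mulrC conj_cdot -along_f hpsi.
rewrite along_f -normCK normrM exprMn norm_psi mulr1.
by rewrite -norm_conjC conj_cdot normCK hfg.
Qed.

End Qubit.

Local Open Scope complex_scope.

Lemma Pcol_00_correlated (R : rcfType) (V : R) a : Pcol V a (~~ a) false false = 0.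
Proof. by case: a; rewrite /Pcol /=; lra. Qed.

Lemma Pcol_11_gap (R : rcfType) (V : R) :
  Pcol V false true true true - Pcol V false false true true = V / 2.
Proof. by rewrite /Pcol /=; lra. Qed.

Section LocalHiddenStateModel.
Set Implicit Arguments.
Unset Strict Implicit.
Variables (R : rcfType) (f g : bool -> 'cV[R[i]]_2).
Variables (X Z : finType) (p : X -> Z -> R) (resp : X -> bool -> bool).
Variables (psi : Z -> 'cV[R[i]]_2) (P : bool -> bool -> bool -> bool -> R).
Hypothesis hfg : mub2 f g.
Hypothesis p_ge0 : forall chi zeta, 0 <= p chi zeta.
Hypothesis psi_pure : forall zeta, pure_state (psi zeta).
Hypothesis P_model : forall a b x y,
  (P a b x y)%:C = \sum_chi \sum_zeta
    (p chi zeta)%:C * (a == resp chi x)%:R *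
    expect (psi zeta) (proj (if y then g b else f b)).
Hypothesis P_00_correlated : forall a, P a (~~ a) false false = 0.

Lemma lhs_term_ge0 a x v chi zeta :
  0 <= (p chi zeta)%:C * (a == resp chi x)%:R * expect (psi zeta) (proj v).
Proof. by rewrite !mulr_ge0 ?ler0c ?ler0n ?expect_proj_ge0. Qed.

Lemma lhs_expect_f_flip_eq0 chi zeta : p chi zeta != 0 ->
  expect (psi zeta) (proj (f (~~ resp chi false))) = 0.
Proof.
move=> p_neq0; set a := resp chi false.
have pC_neq0 : (p chi zeta)%:C != 0 by apply: contra_neq p_neq0 => /complexI.
have /esym terms0 := P_model a (~~ a) false false.
rewrite P_00_correlated in terms0.
move: (psumr2_eq0P _ (lhs_term_ge0 a false _) terms0 chi zeta) => /eqP.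
by rewrite eqxx mulr1 mulf_eq0 (negbTE pC_neq0) => /eqP.
Qed.

Lemma lhs_weighted_expect_g chi zeta c :
  (p chi zeta)%:C * expect (psi zeta) (proj (g c)) = (p chi zeta)%:C * (1 / 2)%:C.
Proof.
have [-> | p_neq0] := eqVneq (p chi zeta) 0; first by rewrite !mul0r.
by rewrite (mub2_expect_half c hfg (psi_pure zeta) (lhs_expect_f_flip_eq0 p_neq0)).
Qed.

Lemma lhs_outcome_g_uniform a b b' : P a b true true = P a b' true true.
Proof.
apply: complexI; rewrite !P_model; apply: eq_bigr => chi _; apply: eq_bigr => zeta _.
by rewrite !(mulrAC (p chi zeta)%:C _ (expect _ _)) !lhs_weighted_expect_g.
Qed.

End LocalHiddenStateModel.

Theorem theorem2 (R : rcfType) (V : R) (hV0 : 0 < V) (hV1 : V <= 1)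
    (f g : bool -> 'cV[R[i]]_2) (hfg : mub2 f g) :
  ~ exists (X Z : finType) (p : X -> Z -> R) (resp : X -> bool -> bool)
      (psi : Z -> 'cV[R[i]]_2),
      (forall chi zeta, 0 <= p chi zeta) /\
      \sum_(chi : X) \sum_(zeta : Z) p chi zeta = 1 /\
      (forall zeta, pure_state (psi zeta)) /\
      forall a b x y : bool,
        (Pcol V a b x y)%:C =
        \sum_(chi : X) \sum_(zeta : Z)
          (p chi zeta)%:C * (a == resp chi x)%:R *
          expect (psi zeta) (proj (if y then g b else f b)).
Proof.
move=> [X [Z [p [resp [psi [p_ge0 [_ [psi_pure P_model]]]]]]]].
have P11 := lhs_outcome_g_uniform hfg p_ge0 psi_pure P_model
  (@Pcol_00_correlated R V) false true false.
have V2_gt0 : 0 < V / 2 by rewrite divr_gt0.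
by rewrite -(Pcol_11_gap V) P11 subrr ltxx in V2_gt0.
Qed.
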